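(* Let $\mathcal{I}$ be an interval hypergraph on $[n]$ and $A$ an acyclic orientation of $\mathcal{I}$. (1) Let $B$ be an orientation obtained from $A$ by an increasing flip with respect to $i<j$, and let $k=\max\{\max(I): I\in\mathcal{I},\ A(I)=i\}$. Then $B$ is acyclic if and only if there is no $J\in\mathcal{I}$ with $j\in J\setminus\{A(J)\}$ and $A(J)\in\,]i,k]$. (2) Symmetrically, let $B$ be an orientation obtained from $A$ by a decreasing flip with respect to $j<i$, and let $k=\min\{\min(I): I\in\mathcal{I},\ A(I)=i\}$. Then $B$ is acyclic if and only if there is no $J\in\mathcal{I}$ with $j\in J\setminus\{A(J)\}$ and $A(J)\in[k,i[$.
   Context: An interval hypergraph $\mathcal{I}$ on $[n]$ is a collection of intervals of $[n]$ containing all singletons. An orientation is a map $O:\mathcal{I}\to[n]$ with $O(I)\in I$; it is acyclic if there are no $H_1,\dots,H_k$, $k\ge2$, with $O(H_{i+1})\in H_i\setminus\{O(H_i)\}$ for $i\in[k-1]$ and $O(H_1)\in H_k\setminus\{O(H_k)\}$. For distinct $i,j\in[n]$, an orientation $O'\neq O$ is obtained from $O$ by a flip of $i$ to $j$ if for all $H\in\mathcal{I}$: if $O(H)\ne O'(H)$ then $O(H)=i$ and $O'(H)=j$; and if $\{i,j\}\subseteq H$ then $O(H)=i\iff O'(H)=j$. The flip is increasing if $i<j$ and decreasing if $i>j$. Here $]a,b]=\{a+1,\dots,b\}$ and $[a,b[=\{a,\dots,b-1\}$. *)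

From mathcomp Require Import all_boot.
Set Implicit Arguments. Unset Strict Implicit. Unset Printing Implicit Defensive.

(* An interval {a, ..., b} of [n] is encoded as the pair (a, b). *)
Definition interval := (nat * nat)%type.

Definition inI (x : nat) (I : interval) : bool := (I.1 <= x <= I.2).

Definition interval_hypergraph (n : nat) (H : seq interval) : Prop :=
  (forall I, I \in H -> [&& 1 <= I.1, I.1 <= I.2 & I.2 <= n]) /\
  (forall x, 1 <= x <= n -> (x, x) \in H).

Definition orientation (H : seq interval) (O : interval -> nat) : Prop :=
  forall I, I \in H -> inI (O I) I.

(* Cycle H_1, ..., H_k (k >= 2, indices 0..k-1 here) with
   O(H_{t+1}) in H_t \ {O(H_t)}, cyclically. *)
Definition has_cycle (H : seq interval) (O : interval -> nat) : Prop :=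
  exists s : seq interval,
    2 <= size s /\ (forall I, I \in s -> I \in H) /\
    forall t, t < size s ->
      let Ht := nth (0, 0) s t in
      let Hn := nth (0, 0) s (t.+1 %% size s) in
      inI (O Hn) Ht /\ O Hn <> O Ht.

Definition acyclic (H : seq interval) (O : interval -> nat) : Prop :=
  ~ has_cycle H O.

Definition flip (H : seq interval) (O O' : interval -> nat) (i j : nat) : Prop :=
  i <> j /\
  (exists I, I \in H /\ O I <> O' I) /\
  (forall I, I \in H -> O I <> O' I -> O I = i /\ O' I = j) /\
  (forall I, I \in H -> inI i I -> inI j I -> (O I = i <-> O' I = j)).

(* An orientation O is acyclic iff the digraph with an arc u -> w whenever w lies in an
   edge oriented to u has no directed cycle; since edges are intervals, an arc x -> y
   yields an arc from x to every vertex between x and y.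
   For an increasing flip, let I0 be an edge oriented to i that reaches k. An A-arc
   x -> j with i < x <= k and the edge I0, which contains [i, k] and now points to j,
   form a 2-cycle of B. Conversely, the B-arcs not leaving j are A-arcs, those leaving i
   stay below j, and the new ones go from j to vertices <= k that A reaches from i. A
   B-cycle not leaving j is an A-cycle; otherwise it comes back to j along A-arcs from
   such a vertex, every vertex it visits beyond k is A-reachable from a vertex of [j, k],
   and so its last arc into j either starts in ]i, k] or closes an A-cycle.
   A decreasing flip is an increasing one for the reversed order, so both cases follow
   from one theorem over an arbitrary total order. *)

From mathcomp Require Import all_boot all_order zify.
From Stdlib Require Import Relation_Operators Operators_Properties.
Set Implicit Arguments. Unset Strict Implicit. Unset Printing Implicit Defensive.
Import Order.TTheory.

#[local] Arguments clos_trans {A} R x _.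
#[local] Arguments clos_refl_trans {A} R x _.
#[local] Arguments t_step {A R x y} _.
#[local] Arguments t_trans {A R x y z} _ _.
#[local] Arguments rt_step {A R x y} _.
#[local] Arguments rt_refl {A R x}.
#[local] Arguments rt_trans {A R x y z} _ _.
#[local] Arguments clos_rt_t {A R x y z} _ _.
#[local] Arguments clos_t_clos_rt {A R x y} _.
#[local] Arguments clos_trans_t1n {A R x y} _.
#[local] Arguments clos_rt_rtn1 {A R x y} _.
#[local] Arguments clos_rtn1_rt {A R x y} _.

Section Closures.
Variable V : Type.
Implicit Types R S : V -> V -> Prop.

Definition acyclic_rel R := forall u, ~ clos_trans R u u.

Lemma clos_trans_mono R S x y :
  (forall a b, R a b -> S a b) -> clos_trans R x y -> clos_trans S x y.
Proof. by move=> RS; elim=> [a b /RS|a b c _ ab _ bc]; [apply: t_step|apply: t_trans ab bc]. Qed.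

Lemma clos_refl_trans_mono R S x y :
  (forall a b, R a b -> S a b) -> clos_refl_trans R x y -> clos_refl_trans S x y.
Proof.
move=> RS; elim=> [a b /RS|a|a b c _ ab _ bc].
- exact: rt_step.
- exact: rt_refl.
- exact: rt_trans ab bc.
Qed.

Lemma clos_t_rt R x y z : clos_trans R x y -> clos_refl_trans R y z -> clos_trans R x z.
Proof. by move=> xy /clos_rt_rtn1; elim=> // a b ab _ xa; apply: t_trans xa (t_step ab). Qed.

Lemma clos_refl_trans_last R x y :
  clos_refl_trans R x y -> x = y \/ exists2 v, clos_refl_trans R x v & R v y.
Proof. by case/clos_rt_rtn1=> [|v w vw /clos_rtn1_rt]; [left|right; exists v]. Qed.

End Closures.

Section AvoidSource.
Variable V : eqType.
Implicit Types R : V -> V -> Prop.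

Definition avoid_source R (j : V) (a b : V) := a != j /\ R a b.

Lemma avoid_source_start R j x y : clos_trans (avoid_source R j) x y -> x != j.
Proof. by case/clos_trans_t1n => [? []|? ? []]. Qed.

Lemma clos_trans_last_exit R j x y : clos_trans R x y ->
  clos_trans (avoid_source R j) x y \/
  clos_refl_trans R x j /\ exists2 z, R j z & clos_refl_trans (avoid_source R j) z y.
Proof.
move/clos_trans_t1n; elim=> [a b ab|a b c ab _ IH]; have [aj|aj] := eqVneq a j.
- by right; split; [rewrite aj; apply: rt_refl|exists b; [rewrite -aj|apply: rt_refl]].
- by left; apply: t_step.
- right; split; first by rewrite aj; apply: rt_refl.
  case: IH => [bc|[_ zc]]; last exact: zc.
  by exists b; [rewrite -aj|apply: clos_t_clos_rt].
- case: IH => [bc|[bj zc]]; first by left; apply: t_trans (t_step _) bc.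
  by right; split; [apply: rt_trans (rt_step ab) bj|].
Qed.

Lemma clos_trans_cycle_split R j u : clos_trans R u u ->
  clos_trans (avoid_source R j) u u \/
  exists2 z, R j z & clos_refl_trans (avoid_source R j) z j.
Proof.
move=> /(clos_trans_last_exit j) [|[uj [z jz zu]]]; first by left.
right; have zj : clos_refl_trans R z j.
  by apply: rt_trans uj; apply: clos_refl_trans_mono zu => a b [].
case: (clos_trans_last_exit j (clos_t_rt (t_step jz) zj)) => [/avoid_source_start|[_ //]].
by rewrite eqxx.
Qed.

End AvoidSource.

Section ConvexHypergraph.
Local Open Scope order_scope.
Context {disp : Order.disp_t} {T : orderType disp} {E : eqType}.
Variables (H : seq E) (in_edge : T -> E -> bool).
Hypothesis in_edge_convex :
  forall I x y z, in_edge x I -> in_edge y I -> x <= z <= y -> in_edge z I.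

Definition arc (O : E -> T) (u w : T) : Prop :=
  exists2 I, I \in H & [/\ O I = u, in_edge w I & w != u].

Section Orientation.
Variable O : E -> T.
Hypothesis oriented : forall I, I \in H -> in_edge (O I) I.

Lemma arc_convexl x y z : arc O x y -> x < z <= y -> arc O x z.
Proof.
move=> [I IH [OI yI _]] /andP [xz zy]; exists I => //; split=> //; last by rewrite gt_eqF.
have xI : in_edge x I by rewrite -OI oriented.
by apply: in_edge_convex xI yI _; rewrite (ltW xz) zy.
Qed.

Lemma arc_convexr x y z : arc O x y -> y <= z < x -> arc O x z.
Proof.
move=> [I IH [OI yI _]] /andP [yz zx]; exists I => //; split=> //; last by rewrite lt_eqF.
have xI : in_edge x I by rewrite -OI oriented.
by apply: in_edge_convex yI xI _; rewrite yz (ltW zx).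
Qed.

End Orientation.

Section Flip.
Variables (A B : E -> T) (i j k : T).
Hypotheses (orientA : forall I, I \in H -> in_edge (A I) I)
           (orientB : forall I, I \in H -> in_edge (B I) I).
Hypothesis flip_nontrivial : exists I, I \in H /\ A I <> B I.
Hypothesis flip_moves_i_to_j : forall I, I \in H -> A I <> B I -> A I = i /\ B I = j.
Hypothesis flip_on_ij_edges :
  forall I, I \in H -> in_edge i I -> in_edge j I -> (A I = i <-> B I = j).
Hypothesis lt_ij : i < j.
Hypothesis k_attained : exists2 I0, I0 \in H & A I0 = i /\ in_edge k I0.
Hypothesis k_max : forall I y, I \in H -> A I = i -> in_edge y I -> y <= k.

Lemma flip_cases I : I \in H -> A I = B I \/ A I = i /\ B I = j.
Proof. by move=> IH; have [|/eqP/(flip_moves_i_to_j IH)] := eqVneq (A I) (B I); [left|right]. Qed.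

Lemma le_jk : j <= k.
Proof.
have [I [IH /(flip_moves_i_to_j IH) [AI BI]]] := flip_nontrivial.
by apply: (k_max IH AI); rewrite -BI orientB.
Qed.

Lemma arcB_sub_arcA x y : arc B x y -> x != j -> arc A x y.
Proof.
move=> [I IH [BI yI yx]] xj; exists I => //.
by case: (flip_cases IH) => [->//|[_ BIj]]; move: xj; rewrite -BI BIj eqxx.
Qed.

Lemma arcB_from_i_lt y : arc B i y -> y < j.
Proof.
move=> [I IH [BI yI _]]; rewrite ltNge; apply/negP => jy.
have AI : A I = i by case: (flip_cases IH) => [->|[]].
have iI : in_edge i I by rewrite -AI orientA.
have jI : in_edge j I by apply: in_edge_convex iI yI _; rewrite (ltW lt_ij) jy.
by move: lt_ij; rewrite -BI -((flip_on_ij_edges IH iI jI).1 AI) ltxx.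
Qed.

Lemma arcB_from_j_cases y :
  arc B j y -> arc A j y \/ y <= k /\ clos_refl_trans (arc A) i y.
Proof.
move=> [I IH [BI yI yj]]; case: (flip_cases IH) => [AB|[AI _]].
  by left; exists I; rewrite ?AB.
right; split; first exact: k_max IH AI yI.
have [->|yi] := eqVneq y i; first exact: rt_refl.
by apply: rt_step; exists I.
Qed.

Lemma flip_two_cycle x : i < x <= k -> arc A x j -> clos_trans (arc B) x x.
Proof.
move=> /andP [ix xk] [J JH [AJ jJ jx]].
have [I0 I0H [AI0 kI0]] := k_attained.
have iI0 : in_edge i I0 by rewrite -AI0 orientA.
have BI0 : B I0 = j.
  by apply/(flip_on_ij_edges I0H iI0); rewrite ?AI0 // (in_edge_convex iI0 kI0) ?(ltW lt_ij) ?le_jk.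
apply: (@t_trans _ _ x j x); apply: t_step.
  exists J => //; split=> //.
  by case: (flip_cases JH) => [<-//|[AJi _]]; move: ix; rewrite -AJ AJi ltxx.
by exists I0 => //; split; rewrite 1?eq_sym // (in_edge_convex iI0 kI0) ?(ltW ix).
Qed.

Section NoBadArc.
Hypothesis acyclicA : acyclic_rel (arc A).
Hypothesis no_bad_arc : ~ exists2 x, i < x <= k & arc A x j.

Let arcB_off_j := avoid_source (arc B) j.

Lemma no_back_arc a b : clos_refl_trans (arc A) a b -> ~ arc A b a.
Proof. by move=> ab ba; apply: (acyclicA (clos_rt_t ab (t_step ba))). Qed.

Lemma source_ge_j y z : clos_refl_trans (arc A) i y -> arcB_off_j y z -> j <= z -> j <= y.
Proof.
move=> iy [yj Byz] jz; have Ayz := arcB_sub_arcA Byz yj.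
rewrite leNgt; apply/negP => yltj.
have [yi|iy'|yi] := ltgtP y i.
- by apply: no_back_arc iy (arc_convexl orientA Ayz _); rewrite yi (ltW (lt_le_trans lt_ij jz)).
- apply: no_bad_arc; exists y; first by rewrite iy' (ltW (lt_le_trans yltj le_jk)).
  by apply: (arc_convexl orientA Ayz); rewrite yltj jz.
- by move: Byz; rewrite yi => /arcB_from_i_lt; rewrite ltNge jz.
Qed.

Definition guarded v := clos_refl_trans (arc A) i v /\
  (k < v -> exists2 w, j <= w <= k & clos_trans (arc A) w v).

Lemma guarded_step y z : guarded y -> arcB_off_j y z -> guarded z.
Proof.
move=> [iy above_y] yz; have Ayz := arcB_sub_arcA yz.2 yz.1.
split=> [|kz]; first exact: rt_trans iy (rt_step Ayz).
have jy := source_ge_j iy yz (ltW (le_lt_trans le_jk kz)).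
have [yk|ky] := leP y k; first by exists y; [rewrite jy yk|apply: t_step].
by have [w jwk wy] := above_y ky; exists w => //; apply: t_trans wy (t_step Ayz).
Qed.

Lemma no_detour_to_j x :
  x <= k -> clos_refl_trans (arc A) i x -> clos_refl_trans arcB_off_j x j -> x = j.
Proof.
move=> xk ix xj; case: (clos_refl_trans_last xj) => [//|[v xv [vj Bvj]]]; exfalso.
have [iv above_v] : guarded v.
  elim/clos_refl_trans_ind_left: xv => [|a b _ ga ab]; last exact: guarded_step ga ab.
  by split=> // kx; move: xk; rewrite leNgt kx.
have Avj := arcB_sub_arcA Bvj vj.
have jv : j < v by rewrite lt_neqAle eq_sym vj (source_ge_j iv (conj vj Bvj) (lexx j)).
have [vk|kv] := leP v k.
  by apply: no_bad_arc; exists v; rewrite ?(lt_trans lt_ij jv) ?vk.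
have [w /andP [jw wk] wv] := above_v kv.
apply: no_back_arc (clos_t_clos_rt wv) (arc_convexr orientA Avj _).
by rewrite jw (le_lt_trans wk kv).
Qed.

Lemma flip_preserves_acyclic : acyclic_rel (arc B).
Proof.
move=> u /(clos_trans_cycle_split j) [off_j|[z Bjz zj]].
  by apply: (acyclicA (clos_trans_mono _ off_j)) => a b [aj /arcB_sub_arcA]; apply.
case: (arcB_from_j_cases Bjz) => [Ajz|[zk iz]].
  by apply: no_back_arc (clos_refl_trans_mono _ zj) Ajz => a b [aj /arcB_sub_arcA]; apply.
by case: Bjz => I _ [_ _]; rewrite (no_detour_to_j zk iz zj) eqxx.
Qed.

End NoBadArc.

Theorem acyclic_flipE : acyclic_rel (arc A) ->
  acyclic_rel (arc B) <-> ~ exists J, [/\ J \in H, in_edge j J, j != A J & i < A J <= k].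
Proof.
move=> acyclicA; split=> [acyclicB [J [JH jJ jA bounds]]|no_bad].
  have AJj : arc A (A J) j by exists J.
  exact: acyclicB _ (flip_two_cycle bounds AJj).
apply: flip_preserves_acyclic => // -[x bounds [J JH [AJ jJ jx]]].
by apply: no_bad; exists J; rewrite AJ.
Qed.

End Flip.
End ConvexHypergraph.

Lemma walk_of_clos_trans H O x y : clos_trans (arc H inI O) x y ->
  exists I s, [/\ {subset I :: s <= H}, O I = x,
    path (fun I J => inI (O J) I && (O J != O I)) I s &
    inI y (last I s) && (y != O (last I s))].
Proof.
move/clos_trans_t1n; elim=> [a b [I IH [OI bI ba]]|a b c [I IH [OI bI ba]] _].
  by exists I, [::]; split=> //= [J /predU1P [->|]//|]; rewrite OI bI ba.
move=> [J [s [sH OJ walk end_c]]].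
exists I, (J :: s); split=> //=; last by rewrite OJ OI bI ba walk.
by move=> K /predU1P [->//|]; apply: sH.
Qed.

Lemma has_cycleE H O : has_cycle H O <-> exists u, clos_trans (arc H inI O) u u.
Proof.
split=> [[s [s2 [sH hs]]]|[u /walk_of_clos_trans [I [s [sH OI walk /andP [uI uO]]]]]].
  pose w t := O (nth (0, 0) s (t %% size s)).
  have step t : t < size s -> arc H inI O (w t) (w t.+1).
    move=> ts; have /= [next_in ne_next] := hs t ts.
    exists (nth (0, 0) s t); first exact/sH/mem_nth.
    by rewrite /w (modn_small ts); split=> //; apply/eqP.
  have reach t : t < size s -> clos_trans (arc H inI O) (w 0) (w t.+1).
    elim: t => [|t IH] ts; first exact: t_step (step 0 ts).
    exact: t_trans (IH (ltnW ts)) (t_step (step _ ts)).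
  have s0 : 0 < size s by apply: ltn_trans s2.
  exists (w 0); have := reach (size s).-1; rewrite prednK // /w modnn mod0n.
  by apply.
exists (I :: s); split.
  by case: s uI uO {sH walk} => [|J s] //=; rewrite -OI eqxx.
split=> // t /=; rewrite ltnS leq_eqVlt => /predU1P [->|ts].
  by rewrite modnn /= OI (set_nth_default I) // -last_nth; split=> //; apply/eqP.
move/(pathP (0, 0)): walk => /(_ t ts) /andP [next_in ne_next].
by rewrite modn_small ?ltnS //; split=> //; apply/eqP.
Qed.

Lemma acyclicE H O : acyclic H O <-> acyclic_rel (arc H inI O).
Proof.
split=> [acyc u uu|acyc /has_cycleE [u]]; last exact: acyc.
by apply: acyc; apply/has_cycleE; exists u.
Qed.

Lemma big_selective_attained (R : Type) (I : eqType) (op : R -> R -> R) (x0 : R)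
    (r : seq I) (P : pred I) (F : I -> R) :
  (forall a b, op a b = a \/ op a b = b) ->
  \big[op/x0]_(i <- r | P i) F i = x0 \/
  exists2 i, i \in r & P i /\ F i = \big[op/x0]_(i <- r | P i) F i.
Proof.
move=> op_sel; rewrite big_seq_cond.
apply: (big_ind (fun m => m = x0 \/ exists2 i, i \in r & P i /\ F i = m)); first by left.
  by move=> a b Ka Kb; case: (op_sel a b) => ->.
by move=> i /andP [ir Pi]; right; exists i.
Qed.

Lemma bigmin_le_seq (I : eqType) (r : seq I) (P : pred I) (F : I -> nat) n i :
  i \in r -> P i -> \big[minn/n]_(j <- r | P j) F j <= F i.
Proof.
move=> + Pi; elim: r => // h t IH; rewrite inE big_cons => /predU1P [<-|it].
  by rewrite Pi geq_minl.
by case: ifP => _; rewrite ?geq_min IH ?orbT.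
Qed.

Lemma inI_convex I x y z : inI x I -> inI y I -> x <= z <= y -> inI z I.
Proof. rewrite /inI; lia. Qed.

Lemma inI_right I x : inI x I -> inI I.2 I.
Proof. rewrite /inI; lia. Qed.

Lemma inI_left I x : inI x I -> inI I.1 I.
Proof. rewrite /inI; lia. Qed.

Lemma inI_convex_dual I (x y z : nat^d) :
  inI x I -> inI y I -> (x <= z <= y)%O -> inI z I.
Proof. by move=> xI yI; rewrite andbC; apply: inI_convex yI xI. Qed.

Lemma acyclic_increasing_flip H A B i j :
  orientation H A -> orientation H B -> flip H A B i j -> i < j -> acyclic H A ->
  let k := \max_(I <- H | A I == i) I.2 in
  acyclic H B <-> ~ exists J, [/\ J \in H, inI j J, j != A J & i < A J <= k].
Proof.
move=> oA oB [_ [changes [only both]]] ij acA k.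
have k_max I y : I \in H -> A I = i -> inI y I -> y <= k.
  by move=> IH AI /andP [_ yI]; apply: leq_trans yI (leq_bigmax_seq _ IH _); apply/eqP.
have [I1 [I1H /(only _ I1H) [AI1 BI1]]] := changes.
have jk : j <= k by apply: (k_max _ _ I1H AI1); rewrite -BI1 oB.
have k_attained : exists2 I0, I0 \in H & A I0 = i /\ inI k I0.
  have [k0|[I0 I0H [/eqP AI0 I0k]]] :
      k = 0 \/ exists2 I0, I0 \in H & (A I0 == i) /\ I0.2 = k.
    by apply: big_selective_attained => a b; lia.
  - by move: jk ij; rewrite k0; lia.
  - by exists I0; rewrite // -I0k; split=> //; apply: inI_right (oA I0 I0H).
apply: iff_trans (acyclicE H B) _.
exact: (acyclic_flipE inI_convex oA oB changes only both ij k_attained k_max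
  (proj1 (acyclicE H A) acA)).
Qed.

Lemma acyclic_decreasing_flip n H A B i j :
  orientation H A -> orientation H B -> flip H A B i j -> j < i -> i <= n -> acyclic H A ->
  let k := \big[minn/n]_(I <- H | A I == i) I.1 in
  acyclic H B <-> ~ exists J, [/\ J \in H, inI j J, j != A J & k <= A J < i].
Proof.
move=> oA oB [_ [changes [only both]]] ji le_in acA k.
have k_min I y : I \in H -> A I = i -> inI y I -> k <= y.
  by move=> IH AI /andP [Iy _]; apply: leq_trans (bigmin_le_seq _ _ IH _) Iy; apply/eqP.
have [I1 [I1H /(only _ I1H) [AI1 BI1]]] := changes.
have kj : k <= j by apply: (k_min _ _ I1H AI1); rewrite -BI1 oB.
have k_attained : exists2 I0, I0 \in H & A I0 = i /\ inI k I0.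
  have [kn|[I0 I0H [/eqP AI0 I0k]]] :
      k = n \/ exists2 I0, I0 \in H & (A I0 == i) /\ I0.1 = k.
    by apply: big_selective_attained => a b; lia.
  - by move: kj ji le_in; rewrite kn; lia.
  - by exists I0; rewrite // -I0k; split=> //; apply: inI_left (oA I0 I0H).
have flipE := @acyclic_flipE _ nat^d _ H inI inI_convex_dual A B i j k oA oB changes only both
  ji k_attained k_min (proj1 (acyclicE H A) acA).
apply: iff_trans (acyclicE H B) (iff_trans flipE _).
by split=> no_bad [J [JH jJ jA bounds]]; apply: no_bad; exists J; split; rewrite // andbC.
Qed.

Theorem proposition3p15 (n : nat) (H : seq interval) (A : interval -> nat) :
  interval_hypergraph n H -> orientation H A -> acyclic H A ->
  (forall (B : interval -> nat) (i j : nat),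
     1 <= i -> i < j -> j <= n -> orientation H B -> flip H A B i j ->
     let k := \max_(I <- H | A I == i) I.2 in
     acyclic H B <->
     ~ (exists J, [/\ J \in H, inI j J, j != A J & i < A J <= k]))
  /\
  (forall (B : interval -> nat) (i j : nat),
     1 <= j -> j < i -> i <= n -> orientation H B -> flip H A B i j ->
     let k := \big[minn/n]_(I <- H | A I == i) I.1 in
     acyclic H B <->
     ~ (exists J, [/\ J \in H, inI j J, j != A J & k <= A J < i])).
Proof.
move=> _ oA acA; split=> B i j _ lt_ij le_n oB fl.
  exact: acyclic_increasing_flip.
exact: acyclic_decreasing_flip.
Qed.
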